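(* Let $X$ be a real vector space and let $A\subseteq X$ be convex and relatively solid. Then (1) $cor(A^c)=int_c(A^c)$, where $A^c=X\setminus A$; (2) $\delta A=vcl(A)\setminus cor(A)$, where $\delta A$ is the algebraic boundary of $A$.
   Context: For $C\subseteq X$: $cor(C):=\{x\in C:\ \forall x'\in X\ \exists \lambda'>0 \text{ with } x+\lambda x'\in C\ \forall\lambda\in[0,\lambda']\}$; $icr(C):=\{x\in C:\ \forall x'\in span(C-C)\ \exists \lambda'>0 \text{ with } x+\lambda x'\in C\ \forall\lambda\in[0,\lambda']\}$, and $C$ is relatively solid if $icr(C)\neq\emptyset$; $vcl(C):=\{b\in X:\ \exists x\in X \text{ such that } \forall\lambda'>0\ \exists\lambda\in[0,\lambda'] \text{ with } b+\lambda x\in C\}$. The algebraic boundary $\delta C$ is the set of points of $X$ belonging neither to $cor(C)$ nor to $cor(X\setminus C)$. The core convex topology $\tau_c$ is the topology on $X$ whose open sets are the unions of families of convex sets $B$ with $cor(B)=B$; $int_c$ denotes interior in $\tau_c$. *)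

From HB Require Import structures.
From mathcomp Require Import all_boot all_order all_algebra.
From mathcomp Require Import boolp classical_sets reals.
Set Implicit Arguments. Unset Strict Implicit. Unset Printing Implicit Defensive.
Import Order.TTheory GRing.Theory Num.Theory.
Local Open Scope classical_set_scope.
Local Open Scope ring_scope.

Section AlgebraicNotions.
Variables (R : realType) (X : lmodType R).

Definition convex_set (C : set X) : Prop :=
  forall x y t, C x -> C y -> 0 <= t -> t <= 1 -> C (t *: x + (1 - t) *: y).

Definition cor (C : set X) : set X :=
  [set x | C x /\ forall x' : X, exists2 l' : R, 0 < l' &
     forall l : R, 0 <= l -> l <= l' -> C (x + l *: x')].

Definition span_set (S : set X) : set X :=
  [set v | exists n (a : 'I_n -> R) (s : 'I_n -> X),
     (forall i, S (s i)) /\ v = \sum_(i < n) a i *: s i].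

Definition diff_set (C : set X) : set X :=
  [set v | exists x y, C x /\ C y /\ v = x - y].

Definition icr (C : set X) : set X :=
  [set x | C x /\ forall x' : X, span_set (diff_set C) x' ->
     exists2 l' : R, 0 < l' &
     forall l : R, 0 <= l -> l <= l' -> C (x + l *: x')].

Definition relatively_solid (C : set X) : Prop := icr C !=set0.

Definition vcl (C : set X) : set X :=
  [set b | exists x : X, forall l' : R, 0 < l' ->
     exists l : R, [/\ 0 <= l, l <= l' & C (b + l *: x)]].

Definition alg_boundary (C : set X) : set X :=
  [set x | ~ cor C x /\ ~ cor (~` C) x].

Definition core_convex_open (U : set X) : Prop :=
  exists F : set (set X),
    (forall B, F B -> convex_set B /\ cor B = B) /\ U = \bigcup_(B in F) B.

Definition int_c (S : set X) : set X :=
  [set x | exists U, [/\ core_convex_open U, U `<=` S & U x]].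

End AlgebraicNotions.

(* The inclusion int_c S ⊆ cor S holds for every set S, and vcl A is the
   complement of cor (~` A) for every A, which gives (2) at once.

   For cor (~` A) ⊆ int_c (~` A), fix a0 in icr A, let L be the span of A - A
   and x a point of cor (~` A).  It suffices to find a subspace V containing
   A - a0 and a convex set U ⊆ V, algebraically open relative to V, that
   contains x - a0 and misses A - a0: for an algebraic complement M of V
   (Zorn's lemma) the cylinder a0 + U + M is convex, algebraically open,
   contains x and misses A.  If x - a0 ∉ L, take V = L + ℝ (x - a0) and U the
   half-space L + ℝ_{>0} (x - a0).  If x - a0 ∈ L, take V = L and
   U = (x - a0) + e (a0 - icr A), where e > 0 is chosen so that x + e (a0 - A)
   misses A; such an e exists because x ∉ vcl A. *)

From HB Require Import structures.
From mathcomp Require Import all_boot all_order all_algebra.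
From mathcomp Require Import boolp classical_sets reals.
From mathcomp Require Import ring lra.
Set Implicit Arguments. Unset Strict Implicit. Unset Printing Implicit Defensive.
Import Order.TTheory GRing.Theory Num.Theory.
Local Open Scope classical_set_scope.
Local Open Scope ring_scope.

Section Subspaces.
Variables (R : realType) (X : lmodType R).
Implicit Types (S V M : set X) (u v w z : X).

Definition subspace V : Prop :=
  [/\ V 0, forall u w, V u -> V w -> V (u + w) &
      forall (c : R) u, V u -> V (c *: u)].

Definition complement V M : Prop :=
  [/\ subspace M, forall z, V z -> M z -> z = 0 &
      forall z, exists v m, [/\ V v, M m & z = v + m]].

Lemma subspaceB V u w : subspace V -> V u -> V w -> V (u - w).
Proof.
by case=> _ VD VZ Vu Vw; apply: VD => //; rewrite -scaleN1r; apply: VZ.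
Qed.

Lemma sub_span_set S : S `<=` span_set S.
Proof.
move=> v Sv; exists 1%N, (fun=> 1), (fun=> v); split=> //.
by rewrite big_ord1 scale1r.
Qed.

Lemma span_set_subspace S : subspace (span_set S).
Proof.
split.
- by exists 0%N, (fun=> 0), (fun=> 0); split; [case | rewrite big_ord0].
- move=> _ _ [n [a [s [Ss ->]]]] [m [b [t [St ->]]]].
  exists (n + m)%N, (fun i => match split i with inl j => a j | inr k => b k end),
    (fun i => match split i with inl j => s j | inr k => t k end); split.
    by move=> i; case: (split i).
  rewrite big_split_ord /=; congr (_ + _); apply: eq_bigr => i _.
    by rewrite (unsplitK (inl i : 'I_n + 'I_m)).
  by rewrite (unsplitK (inr i : 'I_n + 'I_m)).
- move=> c _ [n [a [s [Ss ->]]]]; exists n, (fun i => c * a i), s; split=> //.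
  by rewrite scaler_sumr; apply: eq_bigr => i _; rewrite scalerA.
Qed.

Lemma diff_set_span (A : set X) a b :
  A a -> A b -> span_set (diff_set A) (a - b).
Proof. by move=> Aa Ab; apply: sub_span_set; exists a, b. Qed.

Lemma exists_complement V : subspace V -> exists M, complement V M.
Proof.
case=> V0 VD VZ.
(* [P] omits [M 0]: the union of the empty chain must satisfy it. *)
pose P M := [/\ forall u w, M u -> M w -> M (u + w),
  forall (c : R) u, M u -> M (c *: u) & forall w, V w -> M w -> w = 0].
have [|M [[MD MZ MV] Mmax]] := @Zorn_bigcup X P.
  move=> F FP Ftot; split.
  - move=> u w [M1 FM1 M1u] [M2 FM2 M2w].
    have [/(_ u M1u) M2u|/(_ w M2w) M1w] := Ftot _ _ FM1 FM2.
      by exists M2 => //; case: (FP _ FM2) => + _ _; apply.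
    by exists M1 => //; case: (FP _ FM1) => + _ _; apply.
  - by move=> c u [M1 FM1 M1u]; exists M1 => //; case: (FP _ FM1) => _ + _; apply.
  - by move=> w Vw [M1 FM1 M1w]; case: (FP _ FM1) => _ _; apply.
have M0 : M 0.
  apply: contrapT => nM0; apply: (Mmax [set 0]).
    split=> [u Mu|/(_ 0 erefl)//].
    by exfalso; apply: nM0; rewrite -(scale0r u); apply: MZ.
  by split=> [u w -> ->|c u ->|]; rewrite ?addr0 ?scaler0.
exists M; split=> // z; apply: contrapT => /forallNP zVM.
have {}zVM v m : V v -> M m -> z <> v + m.
  by move=> Vv Mm zE; apply: (zVM v); exists m.
pose Mz := [set w | exists m (c : R), M m /\ w = m + c *: z].
apply: (Mmax Mz).
  split=> [u Mu|]; first by exists u, 0; rewrite scale0r addr0.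
  move=> /(_ z) Mz_sub.
  have Mz' : M z by apply: Mz_sub; exists 0, 1; rewrite add0r scale1r.
  by apply: (zVM 0 z V0 Mz'); rewrite add0r.
split.
- move=> _ _ [m1 [c1 [Mm1 ->]]] [m2 [c2 [Mm2 ->]]].
  by exists (m1 + m2), (c1 + c2); rewrite scalerDl addrACA; split=> //; apply: MD.
- move=> c _ [m [d [Mm ->]]]; exists (c *: m), (c * d).
  by rewrite scalerDr scalerA; split=> //; apply: MZ.
- move=> w Vw [m [c [Mm wE]]]; rewrite {w}wE in Vw *.
  have [c0 | c_neq0] := eqVneq c 0.
    by move: Vw; rewrite c0 scale0r addr0 => Vm; exact: MV.
  have Vz : V (c^-1 *: (m + c *: z)) by apply: VZ.
  exfalso; apply: (zVM _ (- c^-1 *: m) Vz); first exact: MZ.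
  by rewrite scalerDr scalerA mulVf // scale1r scaleNr addrC addKr.
Qed.

End Subspaces.

Section AlgebraicInterior.
Variables (R : realType) (X : lmodType R).
Implicit Types (A B S T : set X) (x : X).

Lemma corS S T : S `<=` T -> cor S `<=` cor T.
Proof.
move=> ST x [Sx Hx]; split=> [|d]; first exact: ST.
by have [l' l'0 Hl] := Hx d; exists l' => // l l0 l1; apply/ST/Hl.
Qed.

Lemma vclE A : vcl A = ~` cor (~` A).
Proof.
apply/seteqP; split=> x.
  move=> [d Hd] [_ /(_ d) [l' l'0 Hl]].
  by have [l [l0 l1]] := Hd l' l'0; apply: Hl.
move=> ncx; apply: contrapT => nvx; apply: ncx; split.
  move=> Ax; apply: nvx; exists 0 => l' l'0; exists 0.
  by rewrite scaler0 addr0 lexx ltW.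
move=> d; apply: contrapT => nex; apply: nvx; exists d => l' l'0.
apply: contrapT => nl; apply: nex; exists l' => // l l0 l1 Al.
by apply: nl; exists l.
Qed.

Lemma alg_boundaryE A : alg_boundary A = vcl A `\` cor A.
Proof. by rewrite vclE setDE setIC; apply/seteqP; split=> x []. Qed.

Lemma int_c_sub_cor S : int_c S `<=` cor S.
Proof.
move=> x [_ [[F [FB ->]] FS [B FB_B Bx]]].
have [_ corB] := FB B FB_B.
apply: (@corS B); first by move=> y By; apply: FS; exists B.
by rewrite corB.
Qed.

Lemma sub_int_c B S : convex_set B -> cor B = B -> B `<=` S -> B `<=` int_c S.
Proof.
move=> cB corB BS x Bx; exists B; split=> //.
by exists [set B]; split=> [_ ->|]; rewrite ?bigcup_set1.
Qed.

Definition alg_open_in (V U : set X) : Prop :=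
  forall u v, U u -> V v ->
  exists2 l' : R, 0 < l' & forall l, 0 <= l -> l <= l' -> U (u + l *: v).

Lemma convex_affine_image S (c : X) (k : R) :
  convex_set S -> convex_set [set c + k *: s | s in S].
Proof.
move=> cS _ _ t [s1 S1 <-] [s2 S2 <-] t0 t1.
exists (t *: s1 + (1 - t) *: s2); first exact: cS.
rewrite !scalerDr addrACA -scalerDl [t + (1 - t)]addrC subrK scale1r.
by rewrite !scalerA [t * k]mulrC [(1 - t) * k]mulrC -!scalerA -scalerDr.
Qed.

Lemma alg_open_in_affine_image V S (c : X) (k : R) : subspace V -> k != 0 ->
  alg_open_in V S -> alg_open_in V [set c + k *: s | s in S].
Proof.
move=> [_ _ VZ] k_neq0 openS _ v [s Ss <-] Vv.
have [l' l'0 Hl] := openS s (k^-1 *: v) Ss (VZ _ _ Vv).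
exists l' => // l l0 l1; exists (s + l *: (k^-1 *: v)); first exact: Hl.
by rewrite scalerDr addrA !scalerA mulrAC mulfV // mul1r.
Qed.

End AlgebraicInterior.

Section IntrinsicCore.
Variables (R : realType) (X : lmodType R) (A : set X).
Hypothesis convexA : convex_set A.

Lemma icr_convex_comb q p (t : R) : icr A q -> A p -> 0 < t -> t <= 1 ->
  icr A (t *: q + (1 - t) *: p).
Proof.
move=> [Aq Hq] Ap t0 t1; split; first by apply: convexA => //; apply: ltW.
move=> w /Hq [mu mu0 Hmu]; exists (t * mu); first exact: mulr_gt0.
move=> l l0 l1.
have -> : t *: q + (1 - t) *: p + l *: w =
    t *: (q + (t^-1 * l) *: w) + (1 - t) *: p.
  by rewrite scalerDr scalerA mulrA mulfV ?mul1r ?gt_eqF // addrAC.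
apply: convexA => //; last exact: ltW.
apply: Hmu; first by rewrite mulr_ge0 // invr_ge0 ltW.
by rewrite ler_pdivrMl.
Qed.

Lemma icr_convex : convex_set (icr A).
Proof.
move=> q1 q2 t iq1 iq2 t0 t1.
have [t_eq0|t_neq0] := eqVneq t 0.
  by rewrite t_eq0 scale0r add0r subr0 scale1r.
by apply: icr_convex_comb; rewrite // ?lt_def ?t_neq0 //; case: iq2.
Qed.

Lemma icr_alg_open : alg_open_in (span_set (diff_set A)) (icr A).
Proof.
move=> q v iq Lv; have [_ /(_ v Lv) [mu mu0 Hmu]] := iq.
exists (mu / 2) => [|l l0 l1]; first by rewrite divr_gt0.
have -> : q + l *: v = 2^-1 *: q + (1 - 2^-1) *: (q + (2 * l) *: v).
  rewrite scalerDr addrA -scalerDl scalerA -{1}(scale1r q).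
  by congr (_ *: _ + _ *: _); field.
apply: icr_convex_comb => //.
- apply: Hmu; first by rewrite mulr_ge0.
  by move: l1; rewrite ler_pdivlMr //; lra.
- by rewrite invr_gt0.
- by rewrite invf_le1 //; lra.
Qed.

Lemma not_vcl_translate_disjoint x a0 : ~ vcl A x ->
  exists2 e : R, 0 < e & forall q, A q -> ~ A (x + e *: (a0 - q)).
Proof.
move=> nvx; apply: contrapT => /forall2NP H; apply: nvx.
exists (a0 - x) => l' l'0.
have [//|/existsNP [q /not_implyP [Aq /contrapT Aqx]]] := H l'.
pose t := (1 + l')^-1.
have t0 : 0 < t by rewrite invr_gt0; lra.
have t1 : t <= 1 by rewrite invf_le1; lra.
have Et : 1 - t = l' * t by rewrite /t; field; lra.
exists (l' * t); split; first by rewrite mulr_ge0 ?ltW.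
  by rewrite ger_pMr.
have -> : x + (l' * t) *: (a0 - x) = t *: (x + l' *: (a0 - q)) + (1 - t) *: q.
  rewrite Et !scalerDr !scalerN !scalerA [t * l']mulrC -[RHS]addrA subrK.
  rewrite addrCA [t *: x + _]addrC; congr (_ + _).
  by rewrite -{1}(scale1r x) -scalerBl -Et opprB addrCA subrr addr0.
by apply: convexA => //; apply: ltW.
Qed.

End IntrinsicCore.

Section Cylinder.
Variables (R : realType) (X : lmodType R) (p : X) (V U M : set X).
Hypotheses (complVM : complement V M) (subspaceV : subspace V)
  (convexU : convex_set U) (UV : U `<=` V) (openU : alg_open_in V U).

Definition cylinder : set X :=
  [set z | exists u m, [/\ U u, M m & z = p + u + m]].

Lemma cylinder_convex : convex_set cylinder.
Proof.
have [[_ MD MZ] _ _] := complVM.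
move=> _ _ t [u1 [m1 [U1 M1 ->]]] [u2 [m2 [U2 M2 ->]]] t0 t1.
exists (t *: u1 + (1 - t) *: u2), (t *: m1 + (1 - t) *: m2); split.
- exact: convexU.
- by apply: MD; apply: MZ.
rewrite !scalerDr addrACA; congr (_ + _).
by rewrite addrACA -scalerDl [t + (1 - t)]addrC subrK scale1r.
Qed.

Lemma cor_cylinder : cor cylinder = cylinder.
Proof.
have [[_ MD MZ] _ decomp] := complVM.
apply/seteqP; split=> [z [] //|z Bz]; split=> // w.
have [u [m [Uu Mm ->]]] := Bz.
have [v [mw [Vv Mw ->]]] := decomp w.
have [l' l'0 Hl] := openU Uu Vv.
exists l' => // l l0 l1; exists (u + l *: v), (m + l *: mw); split.
- exact: Hl.
- by apply: MD => //; apply: MZ.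
by rewrite scalerDr addrACA -(addrA p).
Qed.

Lemma cylinder_trace z : V (z - p) -> cylinder z -> U (z - p).
Proof.
have [_ VM _] := complVM.
move=> Vz [u [m [Uu Mm zE]]].
have zpE : z - p = u + m by rewrite zE -(addrA p) [_ - p]addrC addKr.
rewrite zpE in Vz *.
have Vm : V m.
  by have := subspaceB subspaceV Vz (UV Uu); rewrite [u + m]addrC addrK.
by rewrite (VM _ Vm Mm) addr0.
Qed.

End Cylinder.

Section Separation.
Variables (R : realType) (X : lmodType R).

Lemma int_c_setC_by_subspace (A V U : set X) (p x : X) :
  subspace V -> convex_set U -> U `<=` V -> alg_open_in V U -> U (x - p) ->
  (forall a, A a -> V (a - p) /\ ~ U (a - p)) -> int_c (~` A) x.
Proof.
move=> subspaceV convexU UV openU Ux sepA.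
have [M complVM] := exists_complement subspaceV.
apply: (@sub_int_c _ _ (cylinder p U M)).
- exact: (cylinder_convex complVM convexU).
- exact: (cor_cylinder p complVM openU).
- move=> a Ba Aa; have [Va] := sepA a Aa; apply.
  exact: (cylinder_trace complVM subspaceV UV).
- exists (x - p), 0; split=> //; first by case: complVM => [[]].
  by rewrite addr0 addrC subrK.
Qed.

End Separation.

Section HalfSpace.
Variables (R : realType) (X : lmodType R) (L : set X) (y : X).
Hypothesis subspaceL : subspace L.

Definition line_sum : set X := [set w | exists l (c : R), L l /\ w = l + c *: y].

Definition half_space : set X :=
  [set w | exists l (c : R), [/\ L l, 0 < c & w = l + c *: y]].

Lemma line_sum_subspace : subspace line_sum.
Proof.
have [L0 LD LZ] := subspaceL; split.
- by exists 0, 0; rewrite scale0r addr0.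
- move=> _ _ [l1 [c1 [L1 ->]]] [l2 [c2 [L2 ->]]].
  by exists (l1 + l2), (c1 + c2); rewrite scalerDl addrACA; split=> //; apply: LD.
- move=> k _ [l [c [Ll ->]]]; exists (k *: l), (k * c).
  by rewrite scalerDr scalerA; split=> //; apply: LZ.
Qed.

Lemma half_space_convex : convex_set half_space.
Proof.
have [_ LD LZ] := subspaceL.
move=> _ _ t [l1 [c1 [L1 c10 ->]]] [l2 [c2 [L2 c20 ->]]] t0 t1.
exists (t *: l1 + (1 - t) *: l2), (t * c1 + (1 - t) * c2); split.
- by apply: LD; apply: LZ.
- nra.
- by rewrite !scalerDr addrACA !scalerA -scalerDl.
Qed.

Lemma half_space_alg_open : alg_open_in line_sum half_space.
Proof.
have [_ LD LZ] := subspaceL.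
move=> _ _ [l [c [Ll c0 ->]]] [lv [cv [Lv ->]]].
have cv_abs := normr_ge0 cv.
have cv_ge : - `|cv| <= cv by rewrite lerNl ler_normr lexx orbT.
exists (c / (1 + `|cv|)) => [|k k0 k1]; first by rewrite divr_gt0 //; lra.
have {}k1 : k * (1 + `|cv|) <= c by rewrite -ler_pdivlMr //; lra.
have k_cv : 0 <= k * (cv + `|cv|) by rewrite mulr_ge0 // -lerBlDr sub0r.
exists (l + k *: lv), (c + k * cv); split.
- by apply: LD => //; apply: LZ.
- nra.
- by rewrite scalerDr addrACA scalerA -scalerDl.
Qed.

End HalfSpace.

Section ComplementOfRelativelySolid.
Variables (R : realType) (X : lmodType R) (A : set X) (a0 x : X).
Hypothesis Aa0 : A a0.
Local Notation L := (span_set (diff_set A)).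

Lemma int_c_setC_off_affine_hull : ~ L (x - a0) -> int_c (~` A) x.
Proof.
move=> nLx; have subspaceL := span_set_subspace (diff_set A).
apply: (@int_c_setC_by_subspace _ _ _
  (line_sum L (x - a0)) (half_space L (x - a0)) a0).
- exact: line_sum_subspace.
- exact: half_space_convex.
- by move=> _ [l [c [Ll _ ->]]]; exists l, c.
- exact: half_space_alg_open.
- by exists 0, 1; rewrite add0r scale1r; split=> //; case: subspaceL.
move=> a Aa; have La := diff_set_span Aa Aa0; split.
  by exists (a - a0), 0; rewrite scale0r addr0.
move=> [l [c [Ll c0 aE]]]; apply: nLx.
have -> : x - a0 = c^-1 *: ((a - a0) - l).
  by rewrite aE addrAC subrr add0r scalerA mulVf ?scale1r // gt_eqF.
by have [_ _ LZ] := subspaceL; apply: LZ; apply: subspaceB.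
Qed.

Lemma int_c_setC_on_affine_hull : convex_set A -> icr A a0 -> ~ vcl A x ->
  L (x - a0) -> int_c (~` A) x.
Proof.
move=> convexA icr_a0 nvx Lx; have subspaceL := span_set_subspace (diff_set A).
have [e e0 He] := not_vcl_translate_disjoint convexA a0 nvx.
pose U := [set (x - a0 + e *: a0) + (- e) *: q | q in icr A].
have UE q : x - a0 + e *: a0 + (- e) *: q = x - a0 + e *: (a0 - q).
  by rewrite scaleNr scalerBr addrA.
apply: (@int_c_setC_by_subspace _ _ _ L U a0) => //.
- exact/convex_affine_image/icr_convex.
- move=> _ [q [Aq _] <-]; rewrite UE.
  by have [_ LD LZ] := subspaceL; apply: LD => //; apply/LZ/diff_set_span.
- apply: alg_open_in_affine_image => //; first by rewrite oppr_eq0 gt_eqF.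
  exact: icr_alg_open.
- by exists a0 => //; rewrite UE subrr scaler0 addr0.
move=> a Aa; split; first exact: diff_set_span.
move=> [q [Aq _]]; rewrite UE addrAC => /addIr aE.
by apply: (He q Aq); rewrite aE.
Qed.

End ComplementOfRelativelySolid.

Lemma cor_setC_sub_int_c (R : realType) (X : lmodType R) (A : set X) :
  convex_set A -> relatively_solid A -> cor (~` A) `<=` int_c (~` A).
Proof.
move=> convexA [a0 icr_a0] x corx; have [Aa0 _] := icr_a0.
have nvx : ~ vcl A x by rewrite vclE => /(_ corx).
have [Lx|nLx] := pselect (span_set (diff_set A) (x - a0)).
  exact: (int_c_setC_on_affine_hull Aa0 convexA icr_a0 nvx Lx).
exact: (int_c_setC_off_affine_hull Aa0 nLx).
Qed.

Theorem proposition4p6 (R : realType) (X : lmodType R) (A : set X) :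
  convex_set A -> relatively_solid A ->
  cor (~` A) = int_c (~` A) /\
  alg_boundary A = vcl A `\` cor A.
Proof.
move=> convexA solidA; split; last exact: alg_boundaryE.
apply/seteqP; split; [exact: cor_setC_sub_int_c | exact: int_c_sub_cor].
Qed.
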